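(* Let $X$ be any real random variable and $q(x)=\min\{\mathbb{P}(X\leqslant x),\mathbb{P}(X\geqslant x)\}$. Let $p>-1$, $p\neq 0$. (a) If $p>0$, then $\big(2^p(p+1)\big)^{-1}\leqslant\mathbb{E}\big(q(X)^p\big)\leqslant 1$. (b) If $-1<p<0$, then $1\leqslant\mathbb{E}\big(q(X)^p\big)\leqslant\big(2^p(p+1)\big)^{-1}$. *)

From HB Require Import structures.
From mathcomp Require Import all_boot all_order all_algebra.
From mathcomp Require Import all_classical all_reals all_analysis.
Set Implicit Arguments. Unset Strict Implicit. Unset Printing Implicit Defensive.
Import Order.TTheory GRing.Theory Num.Theory.
Local Open Scope classical_set_scope.
Local Open Scope ring_scope.

Definition qfun d (T : measurableType d) (R : realType) (P : probability T R)
  (X : T -> R) (x : R) : R :=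
  Num.min (fine (P [set w | X w <= x])) (fine (P [set w | x <= X w])).

From HB Require Import structures.
From mathcomp Require Import all_boot all_order all_algebra.
From mathcomp Require Import all_classical all_reals all_analysis.
From mathcomp Require Import ring lra measurable_realfun.
Set Implicit Arguments. Unset Strict Implicit. Unset Printing Implicit Defensive.
Import Order.TTheory GRing.Theory Num.Theory.
Import numFieldNormedType.Exports.
Local Open Scope classical_set_scope.
Local Open Scope ring_scope.

(* With F(x) = P(X <= x), the event {F(X) <= t} is an increasing union of
   events {X <= u} with F(u) <= t, since {F <= t} is a down-set of R; hence
   P(F(X) <= t) <= t.  Applied to X and -X this gives P(q(X) <= t) <= 2t, i.e.
   q(X) stochastically dominates the uniform law on [0, 1/2].  By the
   layer-cake formula E[q(X)^p] = \int_0^oo P(q(X)^p > r) dr, and the tail of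
   q(X)^p is at least 1 - 2 r^(1/p) for p > 0 and at most 2 r^(1/p) for p < 0;
   integrating these bounds (up to r = 2^-p, resp. from there on) yields
   1 / (2^p (p + 1)).  The other two bounds follow from 0 <= q <= 1 and
   P(q(X) > 0) = 1. *)

Section measurable_levels.
Context {d} {T : measurableType d} {R : realType} (f : T -> R).
Hypothesis mf : measurable_fun setT f.

Lemma measurable_sublevel x : measurable [set w | f w <= x].
Proof. by rewrite -preimage_itvNyc -[_ @^-1` _]setTI; exact: mf. Qed.

Lemma measurable_strict_superlevel x : measurable [set w | x < f w].
Proof. by rewrite -preimage_itvoy -[_ @^-1` _]setTI; exact: mf. Qed.

End measurable_levels.

Lemma nondecreasing_bigcup_measure_le d (T : measurableType d) (R : realType)
    (mu : {measure set T -> \bar R}) (A : (set T)^nat) (t : \bar R) :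
  (forall n, measurable (A n)) -> nondecreasing_seq A ->
  (forall n, mu (A n) <= t)%E -> (mu (\bigcup_n A n) <= t)%E.
Proof.
move=> mA ndA At.
have muA := nondecreasing_cvg_mu (mu := mu) mA (bigcupT_measurable _ mA) ndA.
rewrite -(cvg_lim _ muA) //; apply: lime_le; last exact: nearW.
by apply/cvg_ex; exists (mu (\bigcup_n A n)).
Qed.

Section distribution_tails.
Context {d} {T : measurableType d} {R : realType} (P : probability T R).
Implicit Types (X : T -> R) (x t : R).

Definition lower_tail X x : R := fine (P [set w | X w <= x]).
Definition upper_tail X x : R := fine (P [set w | x <= X w]).

Lemma qfunE X x : qfun P X x = Num.min (lower_tail X x) (upper_tail X x).
Proof. by []. Qed.

Lemma upper_tailE X x : upper_tail X x = lower_tail (fun w => - X w) (- x).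
Proof.
rewrite /upper_tail /lower_tail; congr (fine (P _)).
by apply/seteqP; split => w /=; rewrite lerN2.
Qed.

Lemma lower_tail_ge0 X x : 0 <= lower_tail X x.
Proof. exact/fine_ge0/measure_ge0. Qed.

Lemma upper_tail_ge0 X x : 0 <= upper_tail X x.
Proof. exact/fine_ge0/measure_ge0. Qed.

Variables (X : T -> R) (mX : measurable_fun setT X).

Lemma lower_tailE x : (lower_tail X x)%:E = P [set w | X w <= x].
Proof. by rewrite fineK // fin_num_measure //; exact: measurable_sublevel. Qed.

Lemma lower_tail_le1 x : lower_tail X x <= 1.
Proof.
by rewrite -lee_fin lower_tailE probability_le1 //; exact: measurable_sublevel.
Qed.

Lemma lower_tail_nondecreasing : nondecreasing_fun (lower_tail X).
Proof.
move=> x y xy; rewrite -lee_fin !lower_tailE.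
rewrite le_measure ?inE //; try exact: measurable_sublevel.
by move=> w /= /le_trans; apply.
Qed.

Lemma measurable_lower_tail_comp : measurable_fun setT (lower_tail X \o X).
Proof.
exact: measurableT_comp (nondecreasing_measurable _ lower_tail_nondecreasing) _.
Qed.

Lemma measure_preimage_le_lower_tail (S : set R) (u : R^nat) t :
    measurable (X @^-1` S) -> nondecreasing_seq u ->
    (forall n, lower_tail X (u n) <= t) -> (forall x, S x -> exists n, x <= u n) ->
  (P (X @^-1` S) <= t%:E)%E.
Proof.
move=> mS ndu ut Su.
apply: (@le_trans _ _ (P (\bigcup_n [set w | X w <= u n]))).
  apply: le_measure; rewrite ?inE //.
    by apply: bigcupT_measurable => n; exact: measurable_sublevel.
  by move=> w /Su [n Hn]; exists n.
apply: nondecreasing_bigcup_measure_le => [n|n m nm|n].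
- exact: measurable_sublevel.
- by apply/subsetPset => w /= /le_trans; apply; exact: ndu.
- by rewrite /= -lower_tailE lee_fin.
Qed.

(* [S] is a down-set, cofinally approximated by [u := sup S] if it contains
   its supremum, by [u n := sup S - 1/(n+1)] if it does not, and by [u n := n]
   if it is unbounded. *)
Lemma measure_lower_tail_comp_le t : 0 <= t ->
  (P [set w | (lower_tail X (X w) <= t)%R] <= t%:E)%E.
Proof.
move=> t0; set S := [set x | lower_tail X x <= t].
have mS : measurable (X @^-1` S).
  exact: measurable_sublevel measurable_lower_tail_comp t.
have downS x y : x <= y -> S y -> S x.
  by move=> xy; apply: le_trans; exact: lower_tail_nondecreasing.
rewrite -[[set w | _]]/(X @^-1` S).
have [->|/set0P[x0 Sx0]] := eqVneq S set0.
  by rewrite preimage_set0 measure0 lee_fin.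
have [ubS|nubS] := pselect (has_ubound S); last first.
  apply: (measure_preimage_le_lower_tail (u := fun n => n%:R)) => //.
  - by move=> n m nm; rewrite ler_nat.
  - move=> n; have /existsNP[z /not_implyP[Sz /negP]] : ~ ubound S n%:R.
      by move=> ub; apply: nubS; exists n%:R.
    by rewrite -ltNge => /ltW /downS; apply.
  - move=> x _; exists (Num.Def.archi_bound `|x|).
    exact: le_trans (ler_norm x) (ltW (archi_boundP (normr_ge0 x))).
have supS : has_sup S by split => //; exists x0.
have [Sc|nSc] := pselect (S (sup S)).
  apply: (measure_preimage_le_lower_tail (u := fun=> sup S)) => // x Sx.
  by exists 0%N; exact: sup_upper_bound.
apply: (measure_preimage_le_lower_tail (u := fun n => sup S - n.+1%:R^-1)) => //.
- move=> n m nm; rewrite lerD2l lerN2 lef_pV2 ?posrE ?ltr0n // ler_nat.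
  by rewrite ltnS.
- move=> n; have n_gt0 : 0 < (n.+1%:R : R)^-1 by rewrite invr_gt0 ltr0n.
  by have [e Se /ltW /downS] := sup_adherent n_gt0 supS; apply.
- move=> x Sx; have xc : x < sup S.
    rewrite lt_neqAle sup_upper_bound // andbT.
    by apply: contra_notN nSc => /eqP <-.
  by have [k /ltW] := ltr_add_invr xc; exists k; rewrite lerBrDr.
Qed.

End distribution_tails.

Section qfun_bounds.
Context {d} {T : measurableType d} {R : realType} (P : probability T R).
Variables (X : T -> R) (mX : measurable_fun setT X).

Let mNX : measurable_fun setT (fun w => - X w). Proof. exact: measurableT_comp. Qed.

Lemma measurable_upper_tail_comp : measurable_fun setT (upper_tail P X \o X).
Proof.
apply: eq_measurable_fun (measurable_lower_tail_comp P mNX) => w _ /=.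
by rewrite upper_tailE.
Qed.

Lemma measure_upper_tail_comp_le t : 0 <= t ->
  (P [set w | (upper_tail P X (X w) <= t)%R] <= t%:E)%E.
Proof.
move=> /(measure_lower_tail_comp_le P mNX); congr (P _ <= _)%E.
by apply/seteqP; split => w /=; rewrite upper_tailE.
Qed.

Lemma measurable_qfun_comp : measurable_fun setT (fun w => qfun P X (X w)).
Proof.
exact: measurable_minr (measurable_lower_tail_comp P mX) measurable_upper_tail_comp.
Qed.

Lemma qfun_ge0 x : 0 <= qfun P X x.
Proof. by rewrite qfunE le_min lower_tail_ge0 upper_tail_ge0. Qed.

Lemma qfun_le1 x : qfun P X x <= 1.
Proof. by rewrite qfunE ge_min lower_tail_le1. Qed.

Lemma measure_qfun_comp_le t : 0 <= t ->
  (P [set w | (qfun P X (X w) <= t)%R] <= (2 * t)%:E)%E.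
Proof.
move=> t0; set L := [set w | lower_tail P X (X w) <= t].
set U := [set w | upper_tail P X (X w) <= t].
have mL : measurable L := measurable_sublevel (measurable_lower_tail_comp P mX) t.
have mU : measurable U := measurable_sublevel measurable_upper_tail_comp t.
apply: (@le_trans _ _ (P (L `|` U))).
  apply: le_measure; rewrite ?inE; [|exact: measurableU|].
  - exact: measurable_sublevel measurable_qfun_comp t.
  - by move=> w /=; rewrite qfunE ge_min => /orP[]; [left|right].
apply: le_trans (measureU2 _ mL mU) _.
rewrite mulr_natl mulr2n EFinD leeD //; first exact: measure_lower_tail_comp_le.
exact: measure_upper_tail_comp_le.
Qed.

Lemma measure_qfun_comp_gt u : 0 <= u ->
  ((1 - 2 * u)%:E <= P [set w | (u < qfun P X (X w))%R])%E.
Proof.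
move=> u0; rewrite (_ : [set w | _] = ~` [set w | (qfun P X (X w) <= u)%R]).
  rewrite probability_setC; last exact: measurable_sublevel measurable_qfun_comp u.
  by rewrite EFinB leeB // measure_qfun_comp_le.
by apply/seteqP; split => w /=; rewrite ltNge => /negP.
Qed.

End qfun_bounds.

Section powR_calculus.
Variable R : realType.
Implicit Types (a c e s x y : R).

Lemma le0_ger_powR e x y : e <= 0 -> 0 < x -> x <= y -> y `^ e <= x `^ e.
Proof.
move=> e0 x0 xy; have y0 := lt_le_trans x0 xy.
by rewrite /powR !gt_eqF // ler_expR ler_wnM2l // ler_ln // posrE.
Qed.

Lemma powRVK e x : e != 0 -> 0 <= x -> (x `^ e^-1) `^ e = x.
Proof. by move=> e0 x0; rewrite -powRrM mulVf // powRr1. Qed.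

Lemma powRKV e x : e != 0 -> 0 <= x -> (x `^ e) `^ e^-1 = x.
Proof. by move=> e0 x0; rewrite -powRrM mulfV // powRr1. Qed.

Lemma powR_cvgy0 e : e < 0 -> x `^ e @[x --> +oo] --> 0.
Proof.
move=> e0; apply/cvgrPdist_le => eps eps0; near=> x.
rewrite sub0r normrN ger0_norm ?powR_ge0 //.
have epsx : eps `^ e^-1 <= x by near: x; apply: nbhs_pinfty_ge; exact: num_real.
apply: le_trans (le0_ger_powR (ltW e0) (powR_gt0 _ eps0) epsx) _.
by rewrite powRVK ?lt_eqF // ltW.
Unshelve. all: end_near. Qed.

Lemma continuous_powR e x : 0 < x -> {for x, continuous (fun y => y `^ e)}.
Proof.
move=> x0; apply/differentiable_continuous/derivable1_diffP.
by apply: derivable_powR; rewrite in_itv /= x0.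
Qed.

Lemma is_derive_scale_powR c e x : 0 < x ->
  is_derive x 1 (fun y => c * y `^ e) (c * (e * x `^ (e - 1))).
Proof. by move=> x0; have := is_deriveZ c (is_derive1_powR e x0). Qed.

Lemma integral_itv0_1_sub_powR c s a : 0 < s -> 0 < a ->
  (\int[lebesgue_measure]_(x in `[0%R, a]) (1 - c * x `^ s)%:E =
   (a - c / (s + 1) * a `^ (s + 1))%:E)%E.
Proof.
move=> s0 a0; set k := c / (s + 1).
have s1_gt0 : 0 < s + 1 by rewrite ltr_wpDr // ltW.
have F'E x : 0 < x -> is_derive x 1 (fun y => y - k * y `^ (s + 1)) (1 - c * x `^ s).
  move=> x0; have := is_deriveB (is_derive_id x 1) (is_derive_scale_powR k (s + 1) x0).
  by rewrite addrK /k mulrA divfK ?gt_eqF.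
have f_cont x : 0 < x -> {for x, continuous (fun y => 1 - c * y `^ s)}.
  move=> x0; apply: cvgB; first exact: cvg_cst.
  by apply: cvgM; [exact: cvg_cst|exact: continuous_powR].
rewrite (@continuous_FTC2 _ _ (fun y => y - k * y `^ (s + 1))) //.
- by rewrite powR0 ?gt_eqF // mulr0 subr0 sube0.
- apply/continuous_within_itvP => //; split.
  + by move=> x; rewrite in_itv /= => /andP[x0 _]; exact: f_cont.
  + rewrite powR0 ?gt_eqF // mulr0; apply: cvgB; first exact: cvg_cst.
    by rewrite -[X in _ --> X](mulr0 c); apply: cvgM; [exact: cvg_cst|exact: powR_cvg0].
  + exact/cvg_at_left_filter/f_cont.
- split.
  + by move=> x; rewrite in_itv /= => /andP[x0 _]; case: (F'E x x0).
  + rewrite powR0 ?gt_eqF // mulr0 subr0 -[X in _ --> X](subr0 0).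
    apply: cvgB; first exact/cvg_at_right_filter/cvg_id.
    rewrite -[X in _ --> X](mulr0 k).
    by apply: cvgM; [exact: cvg_cst|exact: powR_cvg0].
  + have Fa : differentiable (fun y => y - k * y `^ (s + 1)) a.
      by apply/derivable1_diffP; case: (F'E a a0).
    exact/cvg_at_left_filter/(differentiable_continuous Fa).
- move=> x; rewrite in_itv /= => /andP[x0 _].
  by have F'x := F'E x x0; rewrite derive1E derive_val.
Qed.

Lemma integral_itvy_powR c s a : 0 <= c -> s < -1 -> 0 < a ->
  (\int[lebesgue_measure]_(x in `[a, +oo[) (c * x `^ s)%:E =
   (- (c / (s + 1) * a `^ (s + 1)))%:E)%E.
Proof.
move=> c0 s1 a0; set k := c / (s + 1); have s1_lt0 : s + 1 < 0 by rewrite -ltrBrDr sub0r.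
have F'E x : 0 < x -> is_derive x 1 (fun y => k * y `^ (s + 1)) (c * x `^ s).
  move=> x0; have := is_derive_scale_powR k (s + 1) x0.
  by rewrite addrK /k mulrA divfK ?lt_eqF.
rewrite (@ge0_continuous_FTC2y _ _ (fun y => k * y `^ (s + 1)) a 0) //.
- by rewrite sub0e.
- by move=> x _; rewrite mulr_ge0 ?powR_ge0.
- apply: continuous_in_subspaceT => x; rewrite inE /= in_itv /= andbT => ax.
  by apply: cvgM; [exact: cvg_cst|exact/continuous_powR/(lt_le_trans a0)].
- by rewrite -(mulr0 k); apply: cvgM; [exact: cvg_cst|exact: powR_cvgy0].
- by move=> x ax; case: (F'E x (lt_trans a0 ax)).
- have Fa : differentiable (fun y => k * y `^ (s + 1)) a.
    by apply/derivable1_diffP; case: (F'E a a0).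
  exact/cvg_at_right_filter/(differentiable_continuous Fa).
- move=> x; rewrite in_itv /= andbT => ax.
  by have F'x := F'E x (lt_trans a0 ax); rewrite derive1E derive_val.
Qed.

End powR_calculus.

Section layer_cake.
Context {d} {T : measurableType d} {R : realType} (P : probability T R).
Variables (Y : T -> R) (mY : measurable_fun setT Y).

Let Y_RV : {RV P >-> R} := mfun_Sub (mem_set mY).

Lemma measurable_measure_strict_superlevel :
  measurable_fun setT (fun r : R => P [set w | (r < Y w)%R]).
Proof.
apply: eq_measurable_fun (ccdf_measurable Y_RV) => r _.
rewrite /ccdf /distribution /= /pushforward; congr (P _).
by apply/seteqP; split => w /=; rewrite in_itv /= andbT.
Qed.

Lemma ge0_integral_layer_cake : (forall w, 0 <= Y w) ->
  (\int[P]_w (Y w)%:E =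
   \int[lebesgue_measure]_(r in `[0%R, +oo[) P [set w | (r < Y w)%R])%E.
Proof.
move=> Y0; have := @ge0_expectation_ccdf _ _ _ P Y_RV Y0.
rewrite expectation_def => ->; apply: eq_integral => r _.
rewrite /ccdf /distribution /= /pushforward; congr (P _).
by apply/seteqP; split => w /=; rewrite in_itv /= andbT.
Qed.

End layer_cake.

(* With [a = 2^-p] this is [∫_0^a (1 - 2 r^(1/p)) dr] for [p > 0] and
   [a + ∫_a^oo 2 r^(1/p) dr] for [p < 0]; it simplifies because [a^(1/p) = 1/2]. *)
Lemma layer_cake_constantE (R : realType) (p : R) : p != 0 -> p != -1 ->
  2 `^ (- p) - 2 / (p^-1 + 1) * (2 `^ (- p)) `^ (p^-1 + 1) = (2 `^ p * (p + 1))^-1.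
Proof.
move=> p0 p1; set a := 2 `^ (- p).
have a_gt0 : 0 < a by exact: powR_gt0.
have a_pinv : a `^ p^-1 = 2^-1.
  by rewrite /a -powRrM mulNr mulfV // powRN powRr1.
rewrite powRD; last by rewrite (gt_eqF a_gt0) implybT.
rewrite a_pinv powRr1 ?ltW // /a powRN.
have t0 : 2 `^ p != 0 by rewrite gt_eqF ?powR_gt0.
have p1' : p + 1 != 0 by rewrite addr_eq0.
by field; rewrite p1' t0 p0.
Qed.

Section qfun_moments.
Context {d} {T : measurableType d} {R : realType} (P : probability T R).
Variables (X : T -> R) (mX : measurable_fun setT X) (p : R).

Local Notation Q w := (qfun P X (X w)).
Local Notation Qp_tail r := (P [set w | (r < Q w `^ p)%R]).

Let mQp : measurable_fun setT (fun w => Q w `^ p).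
Proof. exact: measurableT_comp (measurable_powR p) (measurable_qfun_comp P mX). Qed.

Let mQ_le r : measurable [set w | (Q w <= r)%R].
Proof. exact: measurable_sublevel (measurable_qfun_comp P mX) r. Qed.

Let mQ_gt r : measurable [set w | (r < Q w)%R].
Proof. exact: measurable_strict_superlevel (measurable_qfun_comp P mX) r. Qed.

Let mQp_gt r : measurable [set w | (r < Q w `^ p)%R].
Proof. exact: measurable_strict_superlevel mQp r. Qed.

Let mQp_tail : measurable_fun setT (fun r : R => Qp_tail r).
Proof. exact: measurable_measure_strict_superlevel. Qed.

Let integral_Qp_layer_cake : (\int[P]_w (Q w `^ p)%:E =
  \int[lebesgue_measure]_(r in `[0%R, +oo[) Qp_tail r)%E.
Proof. exact: ge0_integral_layer_cake mQp (fun w => powR_ge0 _ _). Qed.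

Lemma measure_qfun_powR_gt_ge r : 0 < p -> 0 <= r ->
  ((1 - 2 * r `^ p^-1)%:E <= Qp_tail r)%E.
Proof.
move=> p0 r0; apply: le_trans (measure_qfun_comp_gt P mX (powR_ge0 r p^-1)) _.
apply: le_measure; rewrite ?inE; [exact: mQ_gt|exact: mQp_gt|].
move=> w /= rQ; rewrite -[X in (X < _)%R](powRVK (lt0r_neq0 p0) r0).
by apply: gt0_ltr_powR; rewrite ?nnegrE ?powR_ge0 ?qfun_ge0.
Qed.

Lemma measure_qfun_powR_gt_le r : p < 0 -> 0 < r ->
  (Qp_tail r <= (2 * r `^ p^-1)%:E)%E.
Proof.
move=> p0 r0; apply: le_trans (measure_qfun_comp_le P mX (powR_ge0 r p^-1)).
apply: le_measure; rewrite ?inE; [exact: mQp_gt|exact: mQ_le|].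
move=> w /= rQ; have Q_gt0 : 0 < Q w.
  rewrite lt0r qfun_ge0 andbT; apply: contraTneq rQ => ->.
  by rewrite powR0 ?lt_eqF // -leNgt ltW.
rewrite -(powRKV (ltr0_neq0 p0) (qfun_ge0 P X (X w))).
by apply: le0_ger_powR; rewrite ?invr_le0 ?ltW // (lt_trans r0).
Qed.

Lemma measure_qfun_powR_gt_ge1 r : p < 0 -> r < 1 ->
  (1 <= Qp_tail r)%E.
Proof.
move=> p0 r1; have := measure_qfun_comp_gt P mX (lexx 0).
rewrite mulr0 subr0 => /le_trans; apply.
apply: le_measure; rewrite ?inE; [exact: mQ_gt|exact: mQp_gt|].
move=> w /= Q_gt0; apply: lt_le_trans r1 _.
by have := le0_ger_powR (ltW p0) Q_gt0 (qfun_le1 P mX (X w)); rewrite powR1.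
Qed.

Lemma qfun_moment_le1 : 0 < p -> (\int[P]_w (Q w `^ p)%:E <= 1)%E.
Proof.
move=> p0; apply: (@le_trans _ _ (\int[P]_w (cst 1%E) w)%E).
  apply: ge0_le_integral => //.
  - by move=> w _; rewrite lee_fin powR_ge0.
  - exact/measurable_EFinP.
  - move=> w _; rewrite lee_fin /=.
    have := @ge0_ler_powR R p (ltW p0) _ 1 (qfun_ge0 P X (X w)).
    by rewrite nnegrE ler01 powR1 => /(_ isT (qfun_le1 P mX (X w))).
by rewrite integral_cst // mul1e probability_le1.
Qed.

Lemma qfun_moment_ge : 0 < p ->
  (((2 `^ p * (p + 1))^-1)%:E <= \int[P]_w (Q w `^ p)%:E)%E.
Proof.
move=> p0; have p_neq0 : p != 0 by rewrite gt_eqF.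
have p_neqN1 : p != -1 by rewrite gt_eqF // (lt_trans _ p0) // ltrN10.
rewrite integral_Qp_layer_cake -layer_cake_constantE //.
set a := 2 `^ (- p); have a_gt0 : 0 < a by exact: powR_gt0.
rewrite -integral_itv0_1_sub_powR ?invr_gt0 //.
apply: (@le_trans _ _ (\int[lebesgue_measure]_(r in `[0%R, a]) Qp_tail r)%E); last first.
  apply: ge0_subset_integral => //; first exact: measurable_funS mQp_tail.
  by move=> r /=; rewrite !in_itv /= => /andP[->].
apply: ge0_le_integral => //.
- move=> r; rewrite /= in_itv /= => /andP[r0 ra].
  have pinv_ge0 : 0 <= p^-1 by rewrite invr_ge0 ltW.
  have := @ge0_ler_powR R _ pinv_ge0 r a.
  rewrite !nnegrE r0 ltW // => /(_ isT isT ra).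
  rewrite /a -powRrM mulNr mulfV ?gt_eqF // powRN powRr1 // lee_fin.
  by move=> ?; lra.
- apply/measurable_EFinP/measurable_funTS.
  by apply: measurable_funB => //; apply: measurable_funM => //; exact: measurable_powR.
- exact: measurable_funS mQp_tail.
- by move=> r; rewrite /= in_itv /= => /andP[r0 _]; exact: measure_qfun_powR_gt_ge.
Qed.

Lemma qfun_moment_ge1 : p < 0 -> (1 <= \int[P]_w (Q w `^ p)%:E)%E.
Proof.
move=> p0; rewrite integral_Qp_layer_cake.
apply: (@le_trans _ _ (\int[lebesgue_measure]_(r in `[0%R, 1%R[) (cst 1%E) r)%E).
  by rewrite integral_cst //= lebesgue_measure_itv /= lte_fin ltr01 oppr0 adde0 mul1e.
apply: (@le_trans _ _ (\int[lebesgue_measure]_(r in `[0%R, 1%R[) Qp_tail r)%E).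
  apply: ge0_le_integral => //; first exact: measurable_funS mQp_tail.
  by move=> r; rewrite /= in_itv /= => /andP[_ r1]; exact: measure_qfun_powR_gt_ge1.
apply: ge0_subset_integral => //; first exact: measurable_funS mQp_tail.
by move=> r /=; rewrite !in_itv /= => /andP[->].
Qed.

Lemma qfun_moment_le : -1 < p -> p < 0 ->
  (\int[P]_w (Q w `^ p)%:E <= ((2 `^ p * (p + 1))^-1)%:E)%E.
Proof.
move=> pN1 p0; rewrite integral_Qp_layer_cake.
rewrite -layer_cake_constantE ?ltr0_neq0 ?gt_eqF //.
set a := 2 `^ (- p); have a_gt0 : 0 < a by exact: powR_gt0.
have pinv_ltN1 : p^-1 < -1.
  have : p * p^-1 = 1 by rewrite mulfV ?ltr0_neq0.
  by nra.
rewrite (@itv_bndbnd_setU _ _ (BLeft 0%R) (BLeft a) (BInfty _ false)); last 2 first.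
- by rewrite bnd_simp ltW.
- by [].
rewrite ge0_integral_setU //; last 2 first.
- exact: measurable_funS mQp_tail.
- apply/disj_setPS => r [] /=; rewrite !in_itv /= => /andP[_ ra] /andP[ar _].
  by move: (lt_le_trans ra ar); rewrite ltxx.
rewrite EFinB leeD //.
  apply: (@le_trans _ _ (\int[lebesgue_measure]_(r in `[0%R, a[) (cst 1%E) r)%E).
    apply: ge0_le_integral => //; first exact: measurable_funS mQp_tail.
    by move=> r _; exact/probability_le1/mQp_gt.
  by rewrite integral_cst //= lebesgue_measure_itv /= lte_fin a_gt0 oppr0 adde0 mul1e.
rewrite -EFinN -integral_itvy_powR //.
apply: ge0_le_integral => //.
- exact: measurable_funS mQp_tail.
- apply/measurable_EFinP/measurable_funTS.
  by apply: measurable_funM => //; exact: measurable_powR.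
- move=> r; rewrite /= in_itv /= andbT => ar.
  exact/measure_qfun_powR_gt_le/(lt_le_trans a_gt0).
Qed.

End qfun_moments.

Theorem proposition3p2 (d : measure_display) (T : measurableType d)
  (R : realType) (P : probability T R) (X : T -> R)
  (mX : measurable_fun setT X) (p : R) (hp1 : -1 < p) (hp0 : p != 0) :
  (0 < p ->
     (((2 `^ p * (p + 1))^-1)%:E <= \int[P]_w ((qfun P X (X w)) `^ p)%:E
      /\ \int[P]_w ((qfun P X (X w)) `^ p)%:E <= 1%E)%E) /\
  (p < 0 ->
     (1%E <= \int[P]_w ((qfun P X (X w)) `^ p)%:E
      /\ \int[P]_w ((qfun P X (X w)) `^ p)%:E <= ((2 `^ p * (p + 1))^-1)%:E)%E).
Proof.
split=> p_sgn; split.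
- exact: qfun_moment_ge.
- exact: qfun_moment_le1.
- exact: qfun_moment_ge1.
- exact: qfun_moment_le.
Qed.
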